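(* Let $0<p\le\infty$ and $0<q_1<q_2\le\infty$. Then $\ell^{p,q_1}\hookrightarrow\ell^{p,q_2}$, and for all $a\in\ell^{p,q_1}$: 1. $\|a\|_{p,q_2}\le (q_1/p)^{1/q_1-1/q_2}\|a\|_{p,q_1}$ if $p<q_1$; 2. $\|a\|_{p,q_2}\le\|a\|_{p,q_1}$ if $p\ge q_1$.
   Context: For a scalar sequence $a=(a_n)$, its decreasing rearrangement is $a^*_n=\inf\{\omega>0:\#\{k:|a_k|>\omega\}\le n-1\}$. For $p,q\in(0,\infty]$, the Lorentz sequence space $\ell^{p,q}$ consists of all sequences $a$ with $\|a\|_{p,q}<\infty$, where $\|a\|_{p,q}=\big(\sum_{n=1}^\infty (a_n^* )^q n^{q/p-1}\big)^{1/q}$ if $q<\infty$, and $\|a\|_{p,\infty}=\sup_{n}n^{1/p}a_n^*$; convention $1/\infty=0$. $X\hookrightarrow Y$ means $X\subset Y$ as a linear subspace and there is $C\ge0$ with $\|a\|_Y\le C\|a\|_X$ for all $a\in X$. *)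

From HB Require Import structures.
From mathcomp Require Import all_boot all_order all_algebra.
From mathcomp Require Import all_classical all_reals all_analysis.
Set Implicit Arguments. Unset Strict Implicit. Unset Printing Implicit Defensive.
Import Order.TTheory GRing.Theory Num.Theory.
Local Open Scope classical_set_scope.
Local Open Scope ring_scope.
Local Open Scope ereal_scope.

Section Lorentz.
Variable R : realType.

Definition einv (p : \bar R) : R :=
  match p with EFin x => x^-1 | _ => 0%R end.

(* #{k : |a_k| > w} <= m, i.e. that set is finite with at most m elements *)
Definition count_gt_le (a : nat -> R) (w : R) (m : nat) : Prop :=
  exists s : seq nat, (size s <= m)%N /\ forall k, (w < `|a k|)%R -> k \in s.

(* decreasing rearrangement a^*_n (for n >= 1; the paper's indexing):
   a^*_n = inf { w > 0 : #{k : |a_k| > w} <= n - 1 } *)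
Definition astar (a : nat -> R) (n : nat) : \bar R :=
  ereal_inf [set w%:E | w in [set w : R | (0 < w)%R /\ count_gt_le a w n.-1]].

Definition lnorm (p q : \bar R) (a : nat -> R) : \bar R :=
  match q with
  | EFin q' =>
      poweR (\sum_(1 <= n <oo)
               (poweR (astar a n) q' * ((n%:R : R) `^ (q' * einv p - 1))%:E))
            (q'^-1)
  | _ => ereal_sup [set ((n%:R : R) `^ (einv p))%:E * astar a n
                    | n in [set n : nat | (1 <= n)%N]]
  end.

Definition in_lorentz (p q : \bar R) (a : nat -> R) : Prop := lnorm p q a < +oo.

End Lorentz.

(* Write s = 1/p, K = max(1, q1 s) and S = ||a||_{p,q1}^q1.  As a* is
   nonincreasing and n^(q1 s) <= K * sum_{k <= n} k^(q1 s - 1), each term obeys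
   n^(q1 s) (a*_n)^q1 <= K S, i.e. n^s a*_n <= (K S)^(1/q1): this is the case
   q2 = oo.  For finite q2 split
     (a*_n)^q2 n^(q2 s - 1) = (n^s a*_n)^(q2 - q1) * (a*_n)^q1 n^(q1 s - 1)
   and sum.  Finally K = 1 when p >= q1 and K = q1/p when p < q1. *)
From HB Require Import structures.
From mathcomp Require Import all_boot all_order all_algebra.
From mathcomp Require Import all_classical all_reals all_analysis.
From mathcomp Require Import ring.
Import Order.TTheory GRing.Theory Num.Theory.
Local Open Scope ring_scope.

Section PowerSums.
Context {R : realType}.

Lemma powR_succ_sub_le (x t : R) : 0 < x -> 1 <= t ->
  (x + 1) `^ t - x `^ t <= t * (x + 1) `^ (t - 1).
Proof.
move=> x_gt0 t_ge1.
have powR_derive (y : R) : 0 < y -> is_derive y 1 (fun z : R => z `^ t) (t * y `^ (t - 1)).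
  exact: is_derive1_powR.
have y_gt0 (y : R) : y \in `[x, x + 1] -> 0 < y.
  by rewrite in_itv /= => /andP[xy _]; apply: lt_le_trans xy.
have [|c] := MVT (ltr_pwDr ltr01 (lexx x))
    (fun y y_in => powR_derive y (y_gt0 y (subset_itv_oo_cc y_in))).
  apply: derivable_within_continuous => y /y_gt0 /powR_derive.
  by case.
rewrite in_itv /= => /andP[xc cx1] ->.
rewrite addrAC subrr add0r mulr1 ler_pM2l ?(lt_le_trans ltr01 t_ge1)//.
have c_gt0 : 0 < c by apply: lt_trans xc.
apply: ge0_ler_powR; rewrite ?nnegrE ?subr_ge0 ?(ltW cx1) ?(ltW c_gt0)//.
by rewrite addr_ge0 // ltW.
Qed.

Lemma powR_le_sum_powR_pred (t : R) (n : nat) : t <= 1 -> (0 < n)%N ->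
  n%:R `^ t <= \sum_(1 <= k < n.+1) k%:R `^ (t - 1).
Proof.
move=> t_le1 n_gt0.
have n_gt0R : (0 : R) < n%:R by rewrite ltr0n.
have -> : n%:R `^ t = \sum_(1 <= k < n.+1) (n%:R : R) `^ (t - 1).
  rewrite sumr_const_nat subn1 /= -{1}(subrK 1 t).
  by rewrite [LHS]powRD ?(gt_eqF n_gt0R) ?implybT// powRr1 ?ler0n// mulr_natr.
rewrite big_nat_cond [leRHS]big_nat_cond; apply: ler_sum => k /andP[/andP[k_ge1 kn] _].
rewrite -(opprB 1 t) !powRN lef_pV2 ?posrE ?powR_gt0 ?ltr0n//.
by apply: ge0_ler_powR; rewrite ?nnegrE ?subr_ge0 ?ler0n// ler_nat -ltnS.
Qed.

Lemma powR_le_mul_sum_powR_pred (t : R) (n : nat) : 1 <= t -> (0 < n)%N ->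
  n%:R `^ t <= t * \sum_(1 <= k < n.+1) k%:R `^ (t - 1).
Proof.
move=> t_ge1; elim: n => [//|[_ _|n IH _]].
  by rewrite big_nat1 !powR1 mulr1.
rewrite big_nat_recr //= mulrDr.
apply: le_trans (lerD (IH isT) (lexx _)).
rewrite -lerBlDl -[n.+2%:R]natr1.
by apply: powR_succ_sub_le; rewrite ?ltr0n.
Qed.

Lemma powR_le_max_sum_powR_pred (t : R) (n : nat) : (0 < n)%N ->
  n%:R `^ t <= Order.max 1 t * \sum_(1 <= k < n.+1) k%:R `^ (t - 1).
Proof.
move=> n_gt0; have [t_le1|t_gt1] := leP t 1.
  by rewrite mul1r powR_le_sum_powR_pred.
exact: powR_le_mul_sum_powR_pred (ltW t_gt1) n_gt0.
Qed.

Lemma powR_weight_split (x y r q s : R) : 0 <= x -> 0 < y -> r != 0 -> r - q != 0 ->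
  x `^ r * y `^ (r * s - 1) = (y `^ s * x) `^ (r - q) * (x `^ q * y `^ (q * s - 1)).
Proof.
move=> x_ge0 y_gt0 r_neq0 rq_neq0.
have [->|x_neq0] := eqVneq x 0.
  by rewrite powR0 // mul0r mulr0 (powR0 rq_neq0) mul0r.
have y_neq0 : y != 0 by rewrite gt_eqF.
have split_x : x `^ r = x `^ (r - q) * x `^ q.
  by rewrite -powRD ?x_neq0 ?implybT// subrK.
have split_y : y `^ (r * s - 1) = y `^ (s * (r - q)) * y `^ (q * s - 1).
  by rewrite -powRD ?y_neq0 ?implybT//; congr powR; ring.
by rewrite powRM ?powR_ge0// -powRrM split_x split_y; ring.
Qed.

End PowerSums.

(* [b] stands for a^* and [S] for ||a||_{p,q}^q, with [s] = 1/p. *)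
Section NonincreasingSequence.
Variables (R : realType) (b : nat -> R) (q s S : R).
Hypothesis b_ge0 : forall n, 0 <= b n.
Hypothesis b_nonincreasing : {homo b : m n / (m <= n)%N >-> n <= m}.
Hypothesis q_gt0 : 0 < q.
Hypothesis b_series :
  (\sum_(1 <= n <oo) (b n `^ q * n%:R `^ (q * s - 1))%:E)%E = S%:E.

Let K := Order.max 1 (q * s).

Let K_ge0 : 0 <= K. Proof. by rewrite le_max ler01. Qed.

Let S_ge0 : 0 <= S.
Proof.
rewrite -lee_fin -b_series; apply: nneseries_ge0 => n _ _.
by rewrite lee_fin mulr_ge0 ?powR_ge0.
Qed.

Lemma lorentz_partial_sum_le n : \sum_(1 <= k < n.+1) b k `^ q * k%:R `^ (q * s - 1) <= S.
Proof.
rewrite -lee_fin -b_series -sumEFin; apply: nneseries_lim_ge => k _ _.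
by rewrite lee_fin mulr_ge0 ?powR_ge0.
Qed.

Lemma lorentz_term_le n : (0 < n)%N -> n%:R `^ (q * s) * b n `^ q <= K * S.
Proof.
move=> n_gt0.
apply: le_trans (ler_wpM2r (powR_ge0 _ _) (powR_le_max_sum_powR_pred _ _ n_gt0)) _.
rewrite -mulrA ler_wpM2l// mulr_suml; apply: le_trans (lorentz_partial_sum_le n).
rewrite big_nat_cond [leRHS]big_nat_cond; apply: ler_sum => k /andP[/andP[_ kn] _].
rewrite mulrC ler_wpM2r ?powR_ge0//.
apply: ge0_ler_powR; rewrite ?nnegrE ?b_ge0 ?(ltW q_gt0)//.
by apply: b_nonincreasing; rewrite -ltnS.
Qed.

Lemma lorentz_weighted_le n : (0 < n)%N -> n%:R `^ s * b n <= K `^ q^-1 * S `^ q^-1.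
Proof.
move=> n_gt0; have q_neq0 : q != 0 by rewrite gt_eqF.
have -> : n%:R `^ s * b n = (n%:R `^ (q * s) * b n `^ q) `^ q^-1.
  rewrite powRM ?powR_ge0// -!powRrM mulrAC mulfV// mul1r.
  by rewrite powRr1.
rewrite -powRM//; apply: ge0_ler_powR;
  rewrite ?nnegrE ?invr_ge0 ?(ltW q_gt0) ?mulr_ge0 ?powR_ge0//.
exact: lorentz_term_le.
Qed.

Lemma lorentz_series_le r : q < r ->
  (\sum_(1 <= n <oo) (b n `^ r * n%:R `^ (r * s - 1))%:E <=
   ((K `^ q^-1 * S `^ q^-1) `^ (r - q) * S)%:E)%E.
Proof.
move=> qr; have r_gt0 : 0 < r by apply: lt_trans qr.
rewrite EFinM -b_series -nneseriesZl; last by move=> n _; rewrite lee_fin mulr_ge0 ?powR_ge0.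
rewrite eseries_cond [leRHS]eseries_cond; apply: lee_nneseries => n.
  by move=> _ _; rewrite lee_fin mulr_ge0 ?powR_ge0.
move=> /= n_gt0; rewrite -EFinM lee_fin.
rewrite (powR_weight_split (b n) _ r q s) ?b_ge0 ?ltr0n ?gt_eqF ?subr_gt0//.
apply: ler_wpM2r; first by rewrite mulr_ge0 ?powR_ge0.
apply: ge0_ler_powR; rewrite ?nnegrE ?subr_ge0 ?(ltW qr) ?mulr_ge0 ?powR_ge0//.
exact: lorentz_weighted_le.
Qed.

Lemma lorentz_series_powR_le r : q < r ->
  ((\sum_(1 <= n <oo) (b n `^ r * n%:R `^ (r * s - 1))%:E) `^ r^-1 <=
   (K `^ (q^-1 - r^-1) * S `^ q^-1)%:E)%E.
Proof.
move=> qr; have r_gt0 : 0 < r by apply: lt_trans qr.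
have series_ge0 : (0 <= \sum_(1 <= n <oo) (b n `^ r * n%:R `^ (r * s - 1))%:E)%E.
  by apply: nneseries_ge0 => n _ _; rewrite lee_fin mulr_ge0 ?powR_ge0.
have r_inv_ge0 : 0 <= r^-1 by rewrite invr_ge0 ltW.
apply: le_trans (gt0_ler_poweR r_inv_ge0 _ _ (lorentz_series_le _ qr)) _.
- by rewrite in_itv /= series_ge0 leey.
- by rewrite in_itv /= leey lee_fin mulr_ge0 ?powR_ge0.
rewrite poweR_EFin lee_fin le_eqVlt; apply/orP; left; apply/eqP.
have exponent : q^-1 * ((r - q) / r) = q^-1 - r^-1 by field; rewrite !gt_eqF.
rewrite powRM ?powR_ge0// -powRrM powRM ?powR_ge0// -!powRrM exponent -mulrA -powRD.
  by rewrite subrK.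
by rewrite subrK invr_eq0 gt_eqF.
Qed.

End NonincreasingSequence.

Section LorentzNorm.
Context {R : realType}.
Implicit Types (a : nat -> R) (p : \bar R) (q : R).
Local Open Scope ereal_scope.

Lemma astar_ge0 a n : 0 <= astar a n.
Proof. by apply: le_ereal_inf_tmp => _ [w [w_gt0 _] <-]; rewrite lee_fin ltW. Qed.

Lemma astar_nonincreasing a : {homo astar a : m n / (m <= n)%N >-> n <= m}.
Proof.
move=> m n mn; apply: ereal_inf_le_tmp => _ [w [w_gt0 [s [s_size s_gt]]] <-].
exists w => //; split => //; exists s; split => //.
by apply: leq_trans s_size _; rewrite -!subn1 leq_sub2r.
Qed.

Lemma in_lorentz_astar_fin p q a : (0 < q)%R -> in_lorentz p q%:E a ->
  forall n, astar a n \is a fin_num.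
Proof.
move=> q_gt0 a_in n; rewrite ge0_fin_numE ?astar_ge0//.
have astar1_lty : astar a 1 < +oo.
  rewrite ltey; apply: contraPN a_in => /eqP astar1_oo.
  rewrite /in_lorentz /lnorm; set S := (X in poweR X _).
  suff -> : S = +oo by rewrite poweRyr ?invr_eq0 ?gt_eqF// ltxx.
  apply/eqP; rewrite eq_le leey /=.
  apply: le_trans (nneseries_lim_ge 2 _); last first.
    by move=> k _ _; rewrite mule_ge0 ?poweR_ge0// lee_fin powR_ge0.
  by rewrite big_nat1 astar1_oo poweRyr ?gt_eqF// powR1 mule1.
case: n => [|n]; first exact: astar1_lty.
exact: le_lt_trans (astar_nonincreasing a _ _ (ltn0Sn n)) astar1_lty.
Qed.

Lemma max1_mul_einv_ltE p q : 0 < p -> p < q%:E ->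
  (Order.max 1 (q * einv p) = q / fine p)%R.
Proof.
case: p => [x||] //=; rewrite !lte_fin => x_gt0 xq.
by apply: max_r; rewrite ler_pdivlMr// mul1r ltW.
Qed.

Lemma max1_mul_einv_geE p q : 0 < p -> q%:E <= p ->
  (Order.max 1 (q * einv p) = 1)%R.
Proof.
case: p => [x||] //=; rewrite ?lte_fin ?lee_fin => x_gt0 qx; apply: max_l.
  by rewrite ler_pdivrMr// mul1r.
by rewrite mulr0.
Qed.

Lemma lnorm_le_max_lnorm p q (q2 : \bar R) a : (0 < q)%R -> q%:E < q2 ->
  in_lorentz p q%:E a ->
  lnorm p q2 a <= ((Order.max 1 (q * einv p)) `^ (q^-1 - einv q2))%:E * lnorm p q%:E a.
Proof.
move=> q_gt0 qq2 a_in.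
pose b n := fine (astar a n).
have astarE n : astar a n = (b n)%:E.
  by rewrite fineK // (in_lorentz_astar_fin _ _ _ q_gt0 a_in).
have b_ge0 n : (0 <= b n)%R by rewrite fine_ge0 ?astar_ge0.
have b_nonincreasing : {homo b : m n / (m <= n)%N >-> (n <= m)%R}.
  by move=> m n mn; rewrite -lee_fin -!astarE astar_nonincreasing.
have lnormE r : lnorm p r%:E a =
    (\sum_(1 <= n <oo) (b n `^ r * n%:R `^ (r * einv p - 1))%:E) `^ r^-1.
  by rewrite /lnorm; congr poweR; apply: eq_eseriesr => n _; rewrite astarE EFinM.
pose S := \sum_(1 <= n <oo) (b n `^ q * n%:R `^ (q * einv p - 1))%:E.
have S_fin : S \is a fin_num.
  rewrite ge0_fin_numE; last first.
    by apply: nneseries_ge0 => n _ _; rewrite lee_fin mulr_ge0 ?powR_ge0.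
  by apply: (@lty_poweRy _ _ q^-1); rewrite ?invr_eq0 ?gt_eqF// -lnormE.
have b_series : S = (fine S)%:E by rewrite fineK.
rewrite lnormE -/S b_series poweR_EFin.
case: q2 qq2 => [r||] //; rewrite ?lte_fin => qr.
  rewrite lnormE -EFinM; apply: lorentz_series_powR_le => //.
rewrite /lnorm /= subr0 -EFinM; apply: ge_ereal_sup => _ [n n_gt0 <-].
rewrite astarE -EFinM lee_fin; exact: lorentz_weighted_le.
Qed.

End LorentzNorm.

Local Open Scope ereal_scope.

Theorem mainTheorem7 (R : realType) (p : \bar R) (q1 : R) (q2 : \bar R)
  (hp : 0 < p) (hq1 : (0 < q1)%R) (hq12 : q1%:E < q2) :
  ((forall a : nat -> R, in_lorentz p q1%:E a -> in_lorentz p q2 a) /\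
   (exists C : R, (0 <= C)%R /\
      forall a : nat -> R, in_lorentz p q1%:E a ->
        lnorm p q2 a <= C%:E * lnorm p q1%:E a)) /\
  (p < q1%:E -> forall a : nat -> R, in_lorentz p q1%:E a ->
     lnorm p q2 a <= ((q1 / fine p) `^ (q1^-1 - einv q2))%:E * lnorm p q1%:E a) /\
  (q1%:E <= p -> forall a : nat -> R, in_lorentz p q1%:E a ->
     lnorm p q2 a <= lnorm p q1%:E a).
Proof.
have bound a := lnorm_le_max_lnorm p q1 q2 a hq1 hq12.
split; [split|split].
- move=> a a_in; apply: le_lt_trans (bound a a_in) _.
  by rewrite lte_mul_pinfty ?lee_fin ?powR_ge0.
- by eexists; split; last exact: bound; exact: powR_ge0.
- by move=> pq1 a; rewrite -max1_mul_einv_ltE//; exact: bound.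
- by move=> q1p a /bound; rewrite max1_mul_einv_geE// powR1 mul1e.
Qed.
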